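(* Let $N_1$ and $N_2$ be Petri nets. If $N_1\approx^\Delta_{bSTb}N_2$ then $N_1\approx_{\mathscr F}N_2$.
   Context: Fix visible actions $\mathrm{Act}$ and $\tau\notin\mathrm{Act}$. A Petri net $N=(S,T,F,M_0,\ell)$ has disjoint $S,T$, $F:(S\times T)\cup(T\times S)\to\mathbb N$, $M_0\in\mathbb N^S$, $\ell:T\to\mathrm{Act}\cup\{\tau\}$. ${}^\bullet x(y)=F(y,x)$, $x^\bullet(y)=F(x,y)$, extended additively to finite multisets. For finite nonempty multiset $G$ of transitions, $M[G\rangle M'$ iff ${}^\bullet G\le M$ and $M'=M-{}^\bullet G+G^\bullet$. Step failures equivalence: $M\xrightarrow{\alpha}M'$ iff $M[t\rangle M'$ with $\ell(t)=\alpha$; $\Rightarrow$ is the reflexive transitive closure of $\xrightarrow{\tau}$; $M\overset{a_1\cdots a_n}{\Longrightarrow}M'$ iff $M\Rightarrow\xrightarrow{a_1}\Rightarrow\cdots\xrightarrow{a_n}\Rightarrow M'$. For a step $A$ (finite nonempty multiset over $\mathrm{Act}$), $M\xrightarrow{A}$ iff $M[G\rangle$ for a finite multiset $G$ of transitions, none labelled $\tau$, with label multiset $A$. $(\sigma,X)$ with $\sigma\in\mathrm{Act}^*$ and $X$ a finite set of steps is a step failure pair iff some $M$ has $M_0\overset{\sigma}{\Longrightarrow}M$, $M\not\xrightarrow{\tau}$ and $M\not\xrightarrow{A}$ for all $A\in X$. $N_1\approx_{\mathscr F}N_2$ iff they have the same step failure pairs. $\approx^\Delta_{bSTb}$: An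 ST-marking is $(M,U)\in\mathbb N^S\times T^*$, initial $(M_0,\varepsilon)$; $(M,U)\xrightarrow{a^+}(M-{}^\bullet t,Ut)$ iff $\ell(t)=a\in\mathrm{Act}$ and $M[t\rangle$; $(M,U)\xrightarrow{a^{-n}}(M+t^\bullet,U^{-n})$ iff the $n$-th element $t$ of $U$ has label $a$ ($U^{-n}$: with it removed); $(M,U)\xrightarrow{\tau}(M',U)$ iff $M[t\rangle M'$ with $\ell(t)=\tau$. $N_1\approx^\Delta_{bSTb}N_2$ iff there is a relation $\mathcal B$ between ST-markings of $N_1$ and $N_2$ relating the initial ones such that: if $\mathfrak M_1\mathcal B\mathfrak M_2$ and $\mathfrak M_1\xrightarrow{\alpha}\mathfrak M_1'$ then $\mathfrak M_2\Rightarrow\mathfrak M_2^\dagger\xrightarrow{(\alpha)}\mathfrak M_2'$ with $\mathfrak M_1\mathcal B\mathfrak M_2^\dagger$ and $\mathfrak M_1'\mathcal B\mathfrak M_2'$ (here $\Rightarrow$ is the reflexive transitive closure of $\xrightarrow{\tau}$ and $\xrightarrow{(\alpha)}$ means $\xrightarrow{\alpha}$ or, if $\alpha=\tau$, equality), and symmetrically; and if $\mathfrak M_1\mathcal B\mathfrak M_2$ and there is an infinite $\tau$-sequence from $\mathfrak M_1$ all of whose states are related to $\mathfrak M_2$, then there is an infinite $\tau$-sequence from $\mathfrak M_2$ with every state of the first related to every state of the second, and symmetrically. *)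

From Stdlib Require Import List Permutation Arith.
Import ListNotations.
Set Implicit Arguments.

(* Visible actions are the elements of [Act]; tau is encoded as [None]. *)
Record PetriNet (Act : Type) := {
  place : Type;
  trans : Type;
  F_pt : place -> trans -> nat;
  F_tp : trans -> place -> nat;
  M0 : place -> nat;
  lab : trans -> option Act
}.
Arguments place {Act}. Arguments trans {Act}. Arguments F_pt {Act}.
Arguments F_tp {Act}. Arguments M0 {Act}. Arguments lab {Act}.

Section Nets.
Context {Act : Type} (N : PetriNet Act).

Definition marking := place N -> nat.

Definition preset_ms (G : list (trans N)) (s : place N) : nat :=
  fold_right (fun t acc => F_pt N s t + acc) 0 G.

Definition enabled (M : marking) (t : trans N) : Prop :=
  forall s, F_pt N s t <= M s.

Definition fire (M : marking) (t : trans N) (M' : marking) : Prop :=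
  enabled M t /\ forall s, M' s = M s - F_pt N s t + F_tp N t s.

Definition net_step (M : marking) (alpha : option Act) (M' : marking) : Prop :=
  exists t, lab N t = alpha /\ fire M t M'.

Inductive weak_trace : marking -> list Act -> marking -> Prop :=
| wt_nil : forall M, weak_trace M [] M
| wt_tau : forall M M1 sigma M2,
    net_step M None M1 -> weak_trace M1 sigma M2 -> weak_trace M sigma M2
| wt_act : forall M a M1 sigma M2,
    net_step M (Some a) M1 -> weak_trace M1 sigma M2 -> weak_trace M (a :: sigma) M2.

(* M --A--> for a step A (finite multiset over Act, as a list up to permutation):
   some finite multiset G of non-tau transitions with label multiset A is
   enabled, i.e. its preset is below M. *)
Definition step_enabled (M : marking) (A : list Act) : Prop :=
  exists G : list (trans N),
    Permutation (map (lab N) G) (map Some A) /\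
    forall s, preset_ms G s <= M s.

Definition tau_stable (M : marking) : Prop :=
  forall M', ~ net_step M None M'.

Definition step_failure_pair (sigma : list Act) (X : list (list Act)) : Prop :=
  (forall A, In A X -> A <> []) /\
  exists M, weak_trace (M0 N) sigma M /\ tau_stable M /\
            forall A, In A X -> ~ step_enabled M A.

Definition STmarking := (marking * list (trans N))%type.

Inductive STlabel := STplus (a : Act) | STminus (a : Act) (n : nat) | STtau.

Inductive st_step : STmarking -> STlabel -> STmarking -> Prop :=
| st_plus : forall M U t a M',
    lab N t = Some a -> enabled M t ->
    (forall s, M' s = M s - F_pt N s t) ->
    st_step (M, U) (STplus a) (M', U ++ [t])
| st_minus : forall M U n t a M',
    (* the n-th element (1-indexed) of U is t *)
    1 <= n -> nth_error U (n - 1) = Some t -> lab N t = Some a ->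
    (forall s, M' s = M s + F_tp N t s) ->
    st_step (M, U) (STminus a n) (M', firstn (n - 1) U ++ skipn n U)
| st_tau : forall M U t M',
    lab N t = None -> fire M t M' ->
    st_step (M, U) STtau (M', U).

Definition st_tau_star : STmarking -> STmarking -> Prop :=
  Relation_Operators.clos_refl_trans _ (fun x y => st_step x STtau y).

Definition st_opt_step (x : STmarking) (alpha : STlabel) (y : STmarking) : Prop :=
  st_step x alpha y \/ (alpha = STtau /\ y = x).

Definition tau_run (x0 : STmarking) (x : nat -> STmarking) : Prop :=
  x 0 = x0 /\ forall i, st_step (x i) STtau (x (S i)).

End Nets.

Arguments STmarking {Act} N.
Arguments st_step {Act} N _ _ _.
Arguments st_tau_star {Act} N _ _.
Arguments st_opt_step {Act} N _ _ _.
Arguments tau_run {Act} N _ _.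
Arguments step_failure_pair {Act} N _ _.

Section Bisim.
Context {Act : Type} (N1 N2 : PetriNet Act).

Definition bSTb_transfer {P Q : PetriNet Act}
  (B : STmarking P -> STmarking Q -> Prop) : Prop :=
  (forall m1 m2 alpha m1',
      B m1 m2 -> st_step P m1 alpha m1' ->
      exists m2d m2', st_tau_star Q m2 m2d /\ st_opt_step Q m2d alpha m2' /\
                      B m1 m2d /\ B m1' m2') /\
  (forall m1 m2 (x : nat -> STmarking P),
      B m1 m2 -> tau_run P m1 x -> (forall i, B (x i) m2) ->
      exists y : nat -> STmarking Q, tau_run Q m2 y /\
                 forall i j, B (x i) (y j)).

Definition bSTb_equiv : Prop :=
  exists B : STmarking N1 -> STmarking N2 -> Prop,
    B (M0 N1, []) (M0 N2, []) /\
    bSTb_transfer B /\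
    bSTb_transfer (fun m2 m1 => B m1 m2).

Definition step_failures_equiv : Prop :=
  forall sigma X, step_failure_pair N1 sigma X <-> step_failure_pair N2 sigma X.

End Bisim.

From Stdlib Require Import List Permutation Arith.
From Stdlib Require Import Lia Classical ClassicalEpsilon FunctionalExtensionality Relations.
Import ListNotations.
Set Implicit Arguments.

(* A step failure pair of N1 is witnessed by a τ-stable marking M reached by a
   weak trace. Splitting every visible firing into its start and its end, the
   bisimulation replays the trace in N2 and relates (M, ε) to some marking of N2.
   If N2 could not reach a τ-stable marking related to (M, ε), it would diverge
   while staying related to the stable (M, ε), which the divergence clause
   forbids. Finally a step enabled in the stable N2-marking can be started
   transition by transition; N1 must answer without τ-moves, since none is
   possible below a stable marking, so it starts transitions with the same
   labels and the step is enabled in M as well. *)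

Lemma iterate_choice {T : Type} {P : T -> Prop} {R : T -> T -> Prop} {x0 : T} :
  (forall x, P x -> exists y, P y /\ R x y) -> P x0 ->
  exists f : nat -> T, f 0 = x0 /\ forall i, P (f i) /\ R (f i) (f (S i)).
Proof.
  intros Hsucc HP0.
  assert (next : forall p : {x | P x}, {q : {x | P x} | R (proj1_sig p) (proj1_sig q)}).
  { intros [x Hx]. destruct (constructive_indefinite_description _ (Hsucc x Hx))
      as [y [Hy Hxy]].
    exact (exist _ (exist _ y Hy) Hxy). }
  set (g := fun i => Nat.iter i (fun p => proj1_sig (next p)) (exist _ x0 HP0)).
  exists (fun i => proj1_sig (g i)). split; [reflexivity|].
  intro i. split; [exact (proj2_sig (g i))|].
  exact (proj2_sig (next (g i))).
Qed.

Section Nets.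
Context {Act : Type} (N : PetriNet Act).

Lemma weak_trace_app (M X Y : marking N) s1 s2 :
  weak_trace M s1 X -> weak_trace X s2 Y -> weak_trace M (s1 ++ s2) Y.
Proof.
  induction 1; intros HY; simpl; auto.
  - eapply wt_tau; eauto.
  - eapply wt_act; eauto.
Qed.

Lemma weak_trace_tau_app (M X Y : marking N) s :
  weak_trace M [] X -> weak_trace X s Y -> weak_trace M s Y.
Proof. exact (fun H1 H2 => weak_trace_app H1 H2). Qed.

Lemma weak_trace_app_tau (M X Y : marking N) s :
  weak_trace M s X -> weak_trace X [] Y -> weak_trace M s Y.
Proof. intros H1 H2. rewrite <- (app_nil_r s). exact (weak_trace_app H1 H2). Qed.

Lemma fire_add (M M' K : marking N) t :
  fire M t M' -> fire (fun s => M s + K s) t (fun s => M' s + K s).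
Proof.
  intros [He Hs]; split.
  - intro s; specialize (He s); lia.
  - intro s; rewrite Hs; specialize (He s); lia.
Qed.

Lemma net_step_add (M M' K : marking N) alpha :
  net_step M alpha M' -> net_step (fun s => M s + K s) alpha (fun s => M' s + K s).
Proof. intros [t [Hl Hf]]. exists t; split; [exact Hl | exact (fire_add K Hf)]. Qed.

Lemma weak_trace_add (M M' K : marking N) s :
  weak_trace M s M' -> weak_trace (fun s => M s + K s) s (fun s => M' s + K s).
Proof.
  induction 1.
  - constructor.
  - eapply wt_tau; [apply net_step_add|]; eassumption.
  - eapply wt_act; [apply net_step_add|]; eassumption.
Qed.

Lemma st_tau_of_net_tau (M M' : marking N) U :
  net_step M None M' -> st_step N (M, U) STtau (M', U).
Proof. intros [t [Hl Hf]]. econstructor; eauto. Qed.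

Lemma st_tau_star_weak_trace (M : marking N) U y :
  st_tau_star N (M, U) y -> exists M', y = (M', U) /\ weak_trace M [] M'.
Proof.
  intro H. apply Operators_Properties.clos_rt_rt1n in H.
  remember (M, U) as x eqn:Hx. revert M Hx.
  induction H as [|x z y Hxz _ IH]; intros Mx Hx; subst.
  - exists Mx; split; [reflexivity | constructor].
  - inversion Hxz; subst.
    destruct (IH M' eq_refl) as [M'' [-> Hw]].
    exists M''; split; [reflexivity|].
    eapply wt_tau; [exists t; split|]; eauto.
Qed.

Lemma st_tau_star_stuck x y :
  (forall z, ~ st_step N x STtau z) -> st_tau_star N x y -> y = x.
Proof.
  intros Hstuck H. apply Operators_Properties.clos_rt_rt1n in H.
  destruct H as [|z ? Hxz _]; [reflexivity|].
  exfalso; exact (Hstuck z Hxz).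
Qed.

Lemma st_tau_stuck_below_stable (M M' : marking N) U z :
  tau_stable M -> (forall s, M' s <= M s) -> ~ st_step N (M', U) STtau z.
Proof.
  intros Hst Hle Hz. inversion Hz as [| |? ? t ? Hl [He _]]; subst.
  apply (Hst (fun s => M s - F_pt N s t + F_tp N t s)).
  exists t; split; [exact Hl|]; split; [|reflexivity].
  intro s; specialize (He s); specialize (Hle s); lia.
Qed.

End Nets.

Section Transfer.
Context {Act : Type} (P Q : PetriNet Act) (B : STmarking P -> STmarking Q -> Prop).

Hypothesis transfer : bSTb_transfer B.
Hypothesis transfer_back : bSTb_transfer (fun m2 m1 => B m1 m2).

Lemma transfer_tau_step (M M' : marking P) (M2 : marking Q) :
  B (M, []) (M2, []) -> net_step M None M' ->
  exists M2', weak_trace M2 [] M2' /\ B (M', []) (M2', []).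
Proof.
  intros HB Hn.
  destruct (proj1 transfer _ _ _ _ HB (st_tau_of_net_tau [] Hn))
    as [m2d [m2' [Hts [Hop [_ HB']]]]].
  destruct (st_tau_star_weak_trace Hts) as [D [-> HwD]].
  destruct Hop as [Hop | [_ ->]].
  - inversion Hop as [| |? ? t ? Hl Hf]; subst.
    exists M'0; split; [|exact HB'].
    eapply weak_trace_app_tau; [exact HwD|].
    eapply wt_tau; [exists t; split; eauto | constructor].
  - exists D; split; assumption.
Qed.

Lemma transfer_visible_step (M M' : marking P) (M2 : marking Q) a :
  B (M, []) (M2, []) -> net_step M (Some a) M' ->
  exists M2', weak_trace M2 [a] M2' /\ B (M', []) (M2', []).
Proof.
  intros HB [t [Hl [He Hs]]].
  set (Mstart := fun s => M s - F_pt P s t).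
  assert (Hplus : st_step P (M, []) (STplus a) (Mstart, [t]))
    by (change [t] with ([] ++ [t]); econstructor; eauto).
  destruct (proj1 transfer _ _ _ _ HB Hplus) as [m2d [m2' [Hts [Hop [_ HBstart]]]]].
  destruct (st_tau_star_weak_trace Hts) as [D [-> HwD]].
  destruct Hop as [Hop | [Habs _]]; [|discriminate].
  inversion Hop as [? ? u ? Dstart Hlu Heu Hsu| |]; subst.
  assert (Hminus : st_step P (Mstart, [t]) (STminus a 1) (M', [])).
  { change (st_step P (Mstart, [t]) (STminus a 1)
              (M', firstn (1 - 1) [t] ++ skipn 1 [t])).
    apply (@st_minus _ P Mstart [t] 1 t a M'); [lia | reflexivity | exact Hl |].
    intro s; rewrite Hs; subst Mstart; simpl. specialize (He s); lia. }
  destruct (proj1 transfer _ _ _ _ HBstart Hminus)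
    as [m2d' [m2'' [Hts' [Hop' [_ HBend]]]]].
  destruct (st_tau_star_weak_trace Hts') as [G [-> HwG]].
  destruct Hop' as [Hop' | [Habs _]]; [|discriminate].
  inversion Hop' as [|? ? n u' a' M2' _ Hnth _ Hsu'|]; subst.
  simpl in Hnth. injection Hnth as <-.
  exists M2'; split; [|exact HBend].
  eapply weak_trace_tau_app; [exact HwD|].
  eapply wt_act.
  - exists u; split; [exact Hlu|]; split; [exact Heu|].
    instantiate (1 := fun s => Dstart s + F_tp Q u s).
    intro s; simpl; rewrite Hsu; reflexivity.
  - (* the τ-moves of [Q] while [u] is in flight remain possible once [u] has ended *)
    replace M2' with (fun s => G s + F_tp Q u s)
      by (apply functional_extensionality; intro s; symmetry; apply Hsu').
    exact (weak_trace_add _ HwG).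
Qed.

Lemma transfer_weak_trace (M M' : marking P) (M2 : marking Q) sigma :
  weak_trace M sigma M' -> B (M, []) (M2, []) ->
  exists M2', weak_trace M2 sigma M2' /\ B (M', []) (M2', []).
Proof.
  intros Hw; revert M2.
  induction Hw as [M|M Ma sigma Mb Hn _ IH|M a Ma sigma Mb Hn _ IH]; intros M2 HB.
  - exists M2; split; [constructor | exact HB].
  - destruct (transfer_tau_step HB Hn) as [Ma2 [Hw1 HBa]].
    destruct (IH _ HBa) as [Mb2 [Hw2 HBb]].
    exists Mb2; split; [exact (weak_trace_tau_app Hw1 Hw2) | exact HBb].
  - destruct (transfer_visible_step HB Hn) as [Ma2 [Hw1 HBa]].
    destruct (IH _ HBa) as [Mb2 [Hw2 HBb]].
    exists Mb2; split; [exact (weak_trace_app Hw1 Hw2) | exact HBb].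
Qed.

Lemma stable_related_absorbs_tau (M : marking P) (M2 M2' : marking Q) :
  tau_stable M -> B (M, []) (M2, []) -> net_step M2 None M2' ->
  B (M, []) (M2', []).
Proof.
  intros Hst HB Hn.
  destruct (proj1 transfer_back _ _ _ _ HB (st_tau_of_net_tau [] Hn))
    as [m1d [m1' [Hts [Hop [_ HB']]]]].
  assert (Hstuck : forall z, ~ st_step P (M, []) STtau z)
    by (intro z; exact (st_tau_stuck_below_stable Hst (fun s => le_n _))).
  rewrite (st_tau_star_stuck Hstuck Hts) in Hop.
  destruct Hop as [Hop | [_ ->]]; [exfalso; exact (Hstuck _ Hop) | exact HB'].
Qed.

Lemma transfer_reach_stable (M : marking P) (M2 : marking Q) :
  tau_stable M -> B (M, []) (M2, []) ->
  exists M2s, weak_trace M2 [] M2s /\ tau_stable M2s /\ B (M, []) (M2s, []).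
Proof.
  intros Hst HB. apply NNPP; intro Hno.
  set (reached := fun y : marking Q => weak_trace M2 [] y /\ B (M, []) (y, [])).
  assert (Hsucc : forall y, reached y -> exists z, reached z /\ net_step y None z).
  { intros y [Hy HBy].
    assert (Hnst : ~ tau_stable y) by (intro; apply Hno; eauto).
    apply not_all_ex_not in Hnst as [z Hz]; apply NNPP in Hz.
    exists z; split; [split|exact Hz].
    - eapply weak_trace_app_tau; [exact Hy | eapply wt_tau; [exact Hz | constructor]].
    - exact (stable_related_absorbs_tau Hst HBy Hz). }
  destruct (iterate_choice Hsucc (conj (wt_nil M2) HB : reached M2))
    as [f [Hf0 Hf]].
  assert (Hrun : tau_run Q (M2, []) (fun i => (f i, [])))
    by (split; [rewrite Hf0; reflexivity | intro i; apply st_tau_of_net_tau, Hf]).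
  destruct (proj2 transfer_back _ _ _ HB Hrun (fun i => proj2 (proj1 (Hf i))))
    as [y [[Hy0 Hy] _]].
  specialize (Hy 0); rewrite Hy0 in Hy.
  exact (st_tau_stuck_below_stable Hst (fun s => le_n _) Hy).
Qed.

Lemma transfer_step_enabled (M : marking P) (Hst : tau_stable M) :
  forall G (M' : marking P) U1 (K2 : marking Q) U2,
  (forall s, M' s <= M s) -> B (M', U1) (K2, U2) ->
  (forall s, preset_ms Q G s <= K2 s) -> (forall t, In t G -> lab Q t <> None) ->
  exists G1, map (lab P) G1 = map (lab Q) G /\ forall s, preset_ms P G1 s <= M' s.
Proof.
  induction G as [|t G IH]; intros M' U1 K2 U2 Hle HB Hpre Hvis.
  - exists []; split; [reflexivity|]. intro s; simpl; lia.
  - destruct (lab Q t) as [a|] eqn:Hl; [|exfalso; exact (Hvis t (or_introl eq_refl) Hl)].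
    set (K2' := fun s => K2 s - F_pt Q s t).
    assert (Hplus : st_step Q (K2, U2) (STplus a) (K2', U2 ++ [t])).
    { econstructor; eauto. intro s; specialize (Hpre s); simpl in Hpre; lia. }
    destruct (proj1 transfer_back _ _ _ _ HB Hplus) as [m1d [m1' [Hts [Hop [_ HB']]]]].
    rewrite (st_tau_star_stuck
               (fun z => st_tau_stuck_below_stable (U := U1) (z := z) Hst Hle) Hts) in Hop.
    destruct Hop as [Hop | [Habs _]]; [|discriminate].
    inversion Hop as [? ? t1 ? M1' Hl1 He1 Hs1| |]; subst.
    destruct (IH M1' _ _ _ (fun s => ltac:(rewrite Hs1; specialize (Hle s); lia)) HB')
      as [G1 [Hmap Hpre1]].
    + intro s; specialize (Hpre s); simpl in Hpre; subst K2'; simpl; lia.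
    + intros u Hu; apply Hvis; right; exact Hu.
    + exists (t1 :: G1); split.
      * simpl; rewrite Hmap, Hl, Hl1; reflexivity.
      * intro s; simpl; specialize (Hpre1 s); rewrite Hs1 in Hpre1.
        specialize (He1 s); lia.
Qed.

Lemma step_failure_pair_transfer sigma X :
  B (M0 P, []) (M0 Q, []) -> step_failure_pair P sigma X -> step_failure_pair Q sigma X.
Proof.
  intros H0 [Hne [M [Hw [Hst Href]]]].
  split; [exact Hne|].
  destruct (transfer_weak_trace Hw H0) as [M2 [Hw2 HB2]].
  destruct (transfer_reach_stable Hst HB2) as [M2s [Hw3 [Hst3 HB3]]].
  exists M2s; split; [exact (weak_trace_app_tau Hw2 Hw3)|]; split; [exact Hst3|].
  intros A HA [G [Hperm Hpre]]. apply (Href A HA).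
  assert (Hvis : forall t, In t G -> lab Q t <> None).
  { intros t Ht Hn.
    assert (Hi : In (lab Q t) (map Some A))
      by (eapply Permutation_in; [exact Hperm | apply in_map; exact Ht]).
    rewrite Hn in Hi. apply in_map_iff in Hi as [x [Hx _]]; discriminate. }
  destruct (transfer_step_enabled Hst G (fun s => le_n _) HB3 Hpre Hvis)
    as [G1 [Hmap Hpre1]].
  exists G1; split; [rewrite Hmap; exact Hperm | exact Hpre1].
Qed.

End Transfer.

Theorem proposition3p8 (Act : Type) (N1 N2 : PetriNet Act) :
  bSTb_equiv N1 N2 -> step_failures_equiv N1 N2.
Proof.
  intros [B [H0 [Hfwd Hbwd]]] sigma X. split.
  - exact (step_failure_pair_transfer Hfwd Hbwd H0).
  - exact (step_failure_pair_transfer (B := fun m2 m1 => B m1 m2) Hbwd Hfwd H0).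
Qed.
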